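(* Let $L$ be a finite-dimensional Lie superalgebra, let $(K,\lambda)\in C(L)$, let $M$ be any Lie superalgebra and $\sigma\in\mathrm{Hom}(M,L)$ surjective. If $\tau\in\mathrm{Hom}(M,K)$ satisfies $\lambda\circ\tau=\sigma$, then $\tau$ is surjective.
   Context: Lie superalgebras over a field of characteristic $\neq 2,3$; $\mathrm{Hom}(A,B)$ denotes Lie superalgebra homomorphisms (even, bracket-preserving). $Z(K)$ is the center, $K'=[K,K]$. $C(L)$ is the class of pairs $(K,\lambda)$, $K$ a Lie superalgebra, $\lambda\in\mathrm{Hom}(K,L)$ surjective with $\mathrm{Ker}(\lambda)\subseteq K'\cap Z(K)$. *)

From HB Require Import structures.
From mathcomp Require Import all_boot all_order all_algebra.
Set Implicit Arguments.
Unset Strict Implicit.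
Unset Printing Implicit Defensive.
Import GRing.Theory.
Local Open Scope ring_scope.

Section LieSuper.
Variable F : fieldType.

(* Axioms of a Lie superalgebra on the F-vector space V with homogeneous
   components par false (= V_0, even) and par true (= V_1, odd), and bracket br. *)
Definition lie_super_axioms (V : lmodType F) (par : bool -> {pred V})
    (br : V -> V -> V) : Prop :=
  [/\
      (forall i, 0 \in par i /\
         forall (a : F) x y, x \in par i -> y \in par i -> a *: x + y \in par i),
      (forall v, exists x0 x1, [/\ x0 \in par false, x1 \in par true & v = x0 + x1]),
      (forall v, v \in par false -> v \in par true -> v = 0),
      (forall (a : F) x y z, br (a *: x + y) z = a *: br x z + br y z)
    & [/\ (forall (a : F) x y z, br z (a *: x + y) = a *: br z x + br z y),
      (forall i j x y, x \in par i -> y \in par j -> br x y \in par (i (+) j)),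
      (forall i j x y, x \in par i -> y \in par j ->
         br x y = - (((-1) ^+ (i && j) : F) *: br y x))
    &
      (forall i j k x y z, x \in par i -> y \in par j -> z \in par k ->
         ((-1) ^+ (i && k) : F) *: br x (br y z)
       + ((-1) ^+ (j && i) : F) *: br y (br z x)
       + ((-1) ^+ (k && j) : F) *: br z (br x y) = 0)]].

Record lieSuper := LieSuper {
  ls_carrier :> lmodType F;
  ls_par : bool -> {pred ls_carrier};
  ls_br : ls_carrier -> ls_carrier -> ls_carrier;
  ls_ax : lie_super_axioms ls_par ls_br }.

Definition is_hom (A B : lieSuper) (f : A -> B) : Prop :=
  [/\ (forall (a : F) x y, f (a *: x + y) = a *: f x + f y),
      (forall i x, x \in @ls_par A i -> f x \in @ls_par B i)
    & (forall x y, f (@ls_br A x y) = @ls_br B (f x) (f y))].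

Definition surj (A B : Type) (f : A -> B) : Prop := forall y, exists x, f x = y.

Definition in_center (K : lieSuper) (z : K) : Prop := forall x : K, @ls_br K z x = 0.

Definition in_derived (K : lieSuper) (z : K) : Prop :=
  exists s : seq (F * K * K), z = \sum_(p <- s) p.1.1 *: @ls_br K p.1.2 p.2.

Definition finite_dim (V : lmodType F) : Prop :=
  exists s : seq V, forall v, exists c : seq F,
    v = \sum_(i < size s) c`_i *: s`_i.

Definition in_C (L K : lieSuper) (lambda : K -> L) : Prop :=
  [/\ is_hom lambda, surj lambda
    & forall z : K, lambda z = 0 -> in_derived z /\ in_center z].

End LieSuper.

(** Since [lambda \o tau = sigma] is onto, [K = im tau + ker lambda]. The
    kernel of [lambda] is central, so every bracket of [K] is a bracket of
    elements of [im tau], whence [K' <= im tau]; as also [ker lambda <= K'],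
    [tau] is onto. Centrality is needed on both sides of the bracket, while
    [in_center] only states it on the left: super skew-symmetry on the
    homogeneous components supplies the right side. *)
From HB Require Import structures.
From mathcomp Require Import all_boot all_order all_algebra.
Set Implicit Arguments.
Unset Strict Implicit.
Unset Printing Implicit Defensive.
Import GRing.Theory.
Local Open Scope ring_scope.

Section LinearFun.
Variables (F : fieldType) (U V : lmodType F) (f : U -> V).
Hypothesis f_linear : linear f.

Let fL : {linear U -> V} := HB.pack f (GRing.isLinear.Build F U V *:%R f f_linear).

Lemma lin_fun0 : f 0 = 0. Proof. exact: raddf0 fL. Qed.
Lemma lin_funD : {morph f : x y / x + y}. Proof. exact: raddfD fL. Qed.
Lemma lin_funB : {morph f : x y / x - y}. Proof. exact: raddfB fL. Qed.
Lemma lin_funZ a : {morph f : x / a *: x}. Proof. exact: (linearZZ fL a). Qed.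

End LinearFun.

Section LieSuperFacts.
Variables (F : fieldType) (K : lieSuper F).
Implicit Types (x y z : K) (i j : bool).
Local Notation par := (@ls_par F K).
Local Notation br := (@ls_br F K).

Lemma ls_brDl z : {morph br^~ z : x y / x + y}.
Proof.
case: (ls_ax K) => _ _ _ br_linl _.
by apply: lin_funD => a x y; apply: br_linl.
Qed.

Lemma ls_brDr z : {morph br z : x y / x + y}.
Proof.
case: (ls_ax K) => _ _ _ _ [br_linr _ _ _].
by apply: lin_funD => a x y; apply: br_linr.
Qed.

Lemma ls_parN i x : x \in par i -> - x \in par i.
Proof.
case: (ls_ax K) => par_sub _ _ _ _; have [par0 parZD] := par_sub i.
by move=> xi; rewrite -scaleN1r -[_ *: x]addr0 parZD.
Qed.

Lemma ls_par_sum_eq0 i x y :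
  x \in par i -> y \in par (~~ i) -> x + y = 0 -> x = 0.
Proof.
case: (ls_ax K) => _ _ par_direct _ _ xi yNi /eqP; rewrite addr_eq0 => /eqP ex.
have xNi : x \in par (~~ i) by rewrite ex ls_parN.
by case: i {yNi} xi xNi => xi xNi; apply: par_direct.
Qed.

Lemma ls_br_skew_eq0 i j x y :
  x \in par i -> y \in par j -> br y x = 0 -> br x y = 0.
Proof.
case: (ls_ax K) => _ _ _ _ [_ _ br_skew _] xi yj yx0.
by rewrite (br_skew _ _ _ _ xi yj) yx0 scaler0 oppr0.
Qed.

Lemma in_center_brr z x : in_center z -> br x z = 0.
Proof.
case: (ls_ax K) => _ par_decomp _ _ [_ br_even _ _] z_central.
have [z0 [z1 [z0_even z1_odd ez]]] := par_decomp z.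
have [x0 [x1 [x0_even x1_odd ->]]] := par_decomp x.
suff homog i xi : xi \in par i -> br xi z = 0.
  by rewrite ls_brDl (homog _ _ x0_even) (homog _ _ x1_odd) addr0.
move=> xi_par; have := z_central xi; rewrite ez ls_brDl => zx0.
have z0x_par : br z0 xi \in par i by have := br_even _ _ _ _ z0_even xi_par.
have z1x_par : br z1 xi \in par (~~ i) by have := br_even _ _ _ _ z1_odd xi_par.
have z0x0 := ls_par_sum_eq0 z0x_par z1x_par zx0.
have z1x0 : br z1 xi = 0 by move: zx0; rewrite z0x0 add0r.
rewrite ls_brDr (ls_br_skew_eq0 xi_par z0_even z0x0).
by rewrite (ls_br_skew_eq0 xi_par z1_odd z1x0) addr0.
Qed.

End LieSuperFacts.

Definition in_image (A B : Type) (f : A -> B) (b : B) : Prop := exists a, f a = b.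

Section ImageModuloCenter.
Variables (F : fieldType) (M K : lieSuper F) (tau : M -> K).
Hypotheses (tau_linear : linear tau) (tau_br : {morph tau : x y / ls_br x y}).
Hypothesis tau_cover : forall k : K, exists m, in_center (k - tau m).

Lemma br_in_image (x y : K) : in_image tau (ls_br x y).
Proof.
have [a xa_central] := tau_cover x; have [b yb_central] := tau_cover y.
exists (ls_br a b); rewrite tau_br.
rewrite -[x](subrK (tau a)) -[y](subrK (tau b)) ls_brDl xa_central add0r.
by rewrite ls_brDr (in_center_brr _ yb_central) add0r.
Qed.

Lemma derived_in_image (z : K) : in_derived z -> in_image tau z.
Proof.
move=> [s ->]; elim: s => [|[[c x] y] s [m tau_m]].
  by exists 0; rewrite big_nil lin_fun0.
have [m' tau_m'] := br_in_image x y.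
by exists (c *: m' + m); rewrite big_cons lin_funD // lin_funZ // tau_m tau_m'.
Qed.

End ImageModuloCenter.

Theorem lemma4p2 (F : fieldType)
  (hF : (2 \notin [pchar F])%N /\ (3 \notin [pchar F])%N)
  (L K M : lieSuper F) (lambda : K -> L) (sigma : M -> L) (tau : M -> K) :
  finite_dim L ->
  in_C lambda ->
  is_hom sigma -> surj sigma ->
  is_hom tau ->
  (forall m : M, lambda (tau m) = sigma m) ->
  surj tau.
Proof.
move=> _ [[lambda_linear _ _] _ ker_lambda] _ sigma_surj [tau_linear _ tau_br].
move=> lambda_tau.
have ker_cover k : exists m, lambda (k - tau m) = 0.
  have [m sigma_m] := sigma_surj (lambda k).
  by exists m; rewrite lin_funB // lambda_tau sigma_m subrr.
have tau_cover k : exists m, in_center (k - tau m).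
  by have [m /ker_lambda[_ ?]] := ker_cover k; exists m.
move=> k; have [m /ker_lambda[k_derived _]] := ker_cover k.
have [m' tau_m'] := derived_in_image tau_linear tau_br tau_cover k_derived.
by exists (m + m'); rewrite lin_funD // tau_m' addrC subrK.
Qed.
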